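(* For every component $c_i$, the value of information assessed by the heuristic satisfies $0\le \mathrm{VoI}_H(i)\le \mathrm{VoI}_L(i)$.
   Context: A system consists of $N$ binary components with random joint state $s\in\{0,1\}^N$ ($s_k=1$: working) with arbitrary prior distribution, system state $u=\phi(s)$ for a structure function $\phi:\{0,1\}^N\to\{0,1\}$. Inspecting $c_i$ yields a binary observation $y_i$ jointly distributed with $s$. Local metric: an action is $A=(a_1,\dots,a_N)\in\{0,1\}^N$ ($a_k=1$: replace $c_k$); replacement is perfect (post-action state $s'_k=1$ if $a_k=1$, $s'_k=s_k$ otherwise). The loss is $\mathcal{L}(s',A)=C_F(1-\phi(s'))+\sum_k a_kC_{R,k}$. The prior loss is $L_\pi=\min_A\mathbb{E}[\mathcal{L}(s',A)]$, attained by a prior optimal action $A_\pi=(a_{\pi,1},\dots,a_{\pi,N})$. The local expected posterior loss is $L^L_\omega(i)=\sum_{c\in\{0,1\}}\mathbb{P}[y_i=c]\min_A\mathbb{E}[\mathcal{L}(s',A)\mid y_i=c]$ and $\mathrm{VoI}_L(i)=L_\pi-L^L_\omega(i)$ (terms with zero probability omitted). Heuristic: after observing $y_i=c$, the posterior action $A_\omega(c)$ is chosen as follows. If $c\ne a_{\pi,i}$, then $A_\omega(c)=A_\pi$. If $c=a_{\pi,i}$, then $A_\omega(c)$ is whichever of $A_\pi$ and $A_\pi^{(i)}$ (the vector $A_\pi$ with its $i$-th entry flipped, all other entries unchanged) has lower conditional expected loss $\mathbb{E}[\mathcal{L}(s',A)\mid y_i=c]$. The heuristic value of information is $\mathrm{VoI}_H(i)=L_\pi-\sum_{c}\mathbb{P}[y_i=c]\,\mathbb{E}[\mathcal{L}(s',A_\omega(c))\mid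 y_i=c]$. *)

From HB Require Import structures.
From mathcomp Require Import all_boot all_order all_algebra.
Set Implicit Arguments. Unset Strict Implicit. Unset Printing Implicit Defensive.
Import Order.TTheory GRing.Theory Num.Theory.
Local Open Scope ring_scope.

Section VoI.
Variables (R : realFieldType) (N : nat).

Notation bvec := {ffun 'I_N -> bool}.
(* an outcome: (component state s, observation vector y) *)
Notation outcome := (bvec * bvec)%type.

Definition is_distr (P : {ffun outcome -> R}) :=
  (forall w, 0 <= P w) /\ \sum_(w : outcome) P w = 1.

Definition post_state (s A : bvec) : bvec := [ffun k => A k || s k].

Definition loss (phi : bvec -> bool) (CF : R) (CR : 'I_N -> R)
  (s' A : bvec) : R :=
  CF * (1 - (phi s')%:R) + \sum_k (A k)%:R * CR k.

Definition exp_loss (P : {ffun outcome -> R}) (phi : bvec -> bool) (CF : R) (CR : 'I_N -> R) (A : bvec) : R :=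
  \sum_(w : outcome) P w * loss phi CF CR (post_state w.1 A) A.

Definition prob_obs (P : {ffun outcome -> R}) (i : 'I_N) (c : bool) : R :=
  \sum_(w : outcome | w.2 i == c) P w.

Definition cond_exp_loss (P : {ffun outcome -> R}) (phi : bvec -> bool) (CF : R) (CR : 'I_N -> R) (i : 'I_N) (c : bool) (A : bvec) : R :=
  (\sum_(w : outcome | w.2 i == c) P w * loss phi CF CR (post_state w.1 A) A)
    / prob_obs P i c.

Definition min_action (f : bvec -> R) : R :=
  \big[Num.min/f [ffun=> false]]_(A : bvec) f A.

Definition prior_loss (P : {ffun outcome -> R}) (phi : bvec -> bool) (CF : R) (CR : 'I_N -> R) : R := min_action (exp_loss P phi CF CR).

Definition prior_optimal (P : {ffun outcome -> R}) (phi : bvec -> bool) (CF : R) (CR : 'I_N -> R) (Api : bvec) :=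
  exp_loss P phi CF CR Api = prior_loss P phi CF CR.

Definition local_post_loss (P : {ffun outcome -> R}) (phi : bvec -> bool) (CF : R) (CR : 'I_N -> R) (i : 'I_N) : R :=
  \sum_(c : bool)
    (if prob_obs P i c == 0 then 0
     else prob_obs P i c * min_action (cond_exp_loss P phi CF CR i c)).

Definition VoI_L (P : {ffun outcome -> R}) (phi : bvec -> bool) (CF : R) (CR : 'I_N -> R) (i : 'I_N) : R :=
  prior_loss P phi CF CR - local_post_loss P phi CF CR i.

Definition flip (Api : bvec) (i : 'I_N) : bvec :=
  [ffun k => if k == i then ~~ Api k else Api k].

Definition heur_action (P : {ffun outcome -> R}) (phi : bvec -> bool) (CF : R) (CR : 'I_N -> R) (Api : bvec) (i : 'I_N) (c : bool) : bvec :=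
  if c != Api i then Api
  else if cond_exp_loss P phi CF CR i c (flip Api i)
          < cond_exp_loss P phi CF CR i c Api
       then flip Api i else Api.

Definition heur_post_loss (P : {ffun outcome -> R}) (phi : bvec -> bool) (CF : R) (CR : 'I_N -> R) (Api : bvec) (i : 'I_N) : R :=
  \sum_(c : bool)
    (if prob_obs P i c == 0 then 0
     else prob_obs P i c *
          cond_exp_loss P phi CF CR i c (heur_action P phi CF CR Api i c)).

Definition VoI_H (P : {ffun outcome -> R}) (phi : bvec -> bool) (CF : R) (CR : 'I_N -> R) (Api : bvec) (i : 'I_N) : R :=
  prior_loss P phi CF CR - heur_post_loss P phi CF CR Api i.

End VoI.

(* The heuristic posterior action on the branch y_i = c is either A_pi or a
   candidate that beats A_pi on that branch, so its branchwise loss is at most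
   the share of the prior expected loss of A_pi carried by y_i = c; summing over
   c bounds the heuristic posterior loss by L_pi.  Conversely, the local
   posterior loss minimises over all actions on each branch, so it is at most
   the heuristic one. *)
From mathcomp Require Import all_boot all_order all_algebra.
Set Implicit Arguments. Unset Strict Implicit. Unset Printing Implicit Defensive.
Import Order.TTheory GRing.Theory Num.Theory.
Local Open Scope ring_scope.

Section HeuristicVoI.
Variables (R : realFieldType) (N : nat).

Local Notation bvec := {ffun 'I_N -> bool}.
Local Notation outcome := (bvec * bvec)%type.

Lemma min_action_le (f : bvec -> R) (A : bvec) : min_action f <= f A.
Proof. by rewrite /min_action (bigD1 A) //= ge_min lexx. Qed.

Variables (P : {ffun outcome -> R}) (phi : bvec -> bool) (CF : R) (CR : 'I_N -> R).
Variable i : 'I_N.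
Hypothesis P_ge0 : forall w, 0 <= P w.

Definition obs_loss (c : bool) (A : bvec) : R :=
  \sum_(w : outcome | w.2 i == c) P w * loss phi CF CR (post_state w.1 A) A.

Lemma prob_obs_ge0 (c : bool) : 0 <= prob_obs P i c.
Proof. exact: sumr_ge0. Qed.

Lemma exp_loss_sum_obs (A : bvec) :
  exp_loss P phi CF CR A = \sum_(c : bool) obs_loss c A.
Proof.
rewrite /exp_loss (bigID (fun w : outcome => w.2 i)) big_bool /= /obs_loss.
by congr (_ + _); apply: eq_bigl => w; case: (w.2 i).
Qed.

Lemma prob_obs_mul_cond_exp_loss (c : bool) (A : bvec) :
  prob_obs P i c != 0 ->
  prob_obs P i c * cond_exp_loss P phi CF CR i c A = obs_loss c A.
Proof. by move=> pc_neq0; rewrite mulrC -mulrA mulVf ?mulr1. Qed.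

Lemma obs_loss_prob_obs0 (c : bool) (A : bvec) :
  prob_obs P i c = 0 -> obs_loss c A = 0.
Proof.
move=> pc0; apply: big1 => w wc.
by rewrite (psumr_eq0P (fun w _ => P_ge0 w) pc0) ?mul0r.
Qed.

Lemma cond_exp_loss_heur_action (Api : bvec) (c : bool) :
  cond_exp_loss P phi CF CR i c (heur_action P phi CF CR Api i c)
  <= cond_exp_loss P phi CF CR i c Api.
Proof. by rewrite /heur_action; case: ifP => // _; case: ifPn => // /ltW. Qed.

Lemma heur_post_loss_le_exp_loss (Api : bvec) :
  heur_post_loss P phi CF CR Api i <= exp_loss P phi CF CR Api.
Proof.
rewrite exp_loss_sum_obs; apply: ler_sum => c _.
have [pc0 | pc_neq0] := eqVneq (prob_obs P i c) 0.
  by rewrite obs_loss_prob_obs0.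
rewrite -(prob_obs_mul_cond_exp_loss Api pc_neq0).
by rewrite ler_wpM2l ?prob_obs_ge0 ?cond_exp_loss_heur_action.
Qed.

Lemma local_post_loss_le_heur (Api : bvec) :
  local_post_loss P phi CF CR i <= heur_post_loss P phi CF CR Api i.
Proof.
apply: ler_sum => c _; case: eqP => // _.
by rewrite ler_wpM2l ?prob_obs_ge0 ?min_action_le.
Qed.

End HeuristicVoI.

Theorem mainTheorem6 (R : realFieldType) (N : nat)
  (P : {ffun ({ffun 'I_N -> bool} * {ffun 'I_N -> bool}) -> R})
  (phi : {ffun 'I_N -> bool} -> bool) (CF : R) (CR : 'I_N -> R)
  (Api : {ffun 'I_N -> bool}) (i : 'I_N) :
  is_distr P ->
  prior_optimal P phi CF CR Api ->
  0 <= VoI_H P phi CF CR Api i /\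
  VoI_H P phi CF CR Api i <= VoI_L P phi CF CR i.
Proof.
move=> [P_ge0 _] Api_opt; split.
  by rewrite subr_ge0 -Api_opt heur_post_loss_le_exp_loss.
by rewrite lerB // local_post_loss_le_heur.
Qed.
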